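(* Consider the GIP model with threshold-type bounds with uniform thresholds $\theta_l,\theta_h$ and $l_{j,0}=1$ for all $v_j\in V$, where $\theta_l>0$, and $h_{j,0}\ge 1$ and $\theta_h h_{j,0}>\theta_l$ for every $j$. Consider the MLT model on the same network with parameters $l'_j=\theta_l\alpha$, $h'_j=\theta_h\alpha h_{j,0}$, $m_j=\theta_h h_{j,0}/\theta_l$ (so $h'_{j,0}=h_{j,0}$). Let $\mathbf x(0)$ be an admissible GIP initial state and let the MLT model start from $\mathbf x'(0)=\mathbf x(0)$. Then $$x_j(t)=(\theta_l\alpha)^t\,x'_j(t)\qquad\text{for all }t\ge 0,\ v_j\in V.$$ Consequently, for $\gamma\in[0,1)$ and $\gamma'=1-(1-\gamma)\theta_l\alpha$, one has $(1-\gamma)^t x_j(t)=(1-\gamma')^t x'_j(t)$ for every $t\ge0$ and $j$, so that the overall influences $\sum_{t\ge1}(1-\gamma)^t x_j(t)$ and $\sum_{t\ge1}(1-\gamma')^t x'_j(t)$ coincide (whenever either converges).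
   Context: Let $G=(V,E)$ be a directed weighted network with node set $V=\{v_1,\dots,v_n\}$ and weighted adjacency matrix $\mathbf W=(W_{ij})$, where $W_{ij}>0$ if $(v_i,v_j)\in E$ and $W_{ij}=0$ otherwise; let $\alpha=\sum_{(v_i,v_j)\in E}W_{ij}/|E|$ be the mean edge weight. The general information propagation (GIP) model with lower bounds $\{l_{j,t}\}$ and upper bounds $\{h_{j,t}\}$ (real numbers with $0\le l_{j,t}\le h_{j,t}$, $l_{j,0}>0$) is the dynamics $x_j(t)=f_{j,t}(\sum_i W_{ij}x_i(t-1))$ for $t>0$, where $f_{j,t}(x)=0$ if $x<l_{j,t}$, $f_{j,t}(x)=x$ if $l_{j,t}\le x<h_{j,t}$, $f_{j,t}(x)=h_{j,t}$ if $x\ge h_{j,t}$; an initial state is admissible if $x_j(0)\in\{0\}\cup[l_{j,0},h_{j,0}]$ for all $j$. Threshold-type bounds with uniform thresholds $\theta_l,\theta_h$ are: for all $t>0$, $v_j\in V$, $l_{j,t}=(\theta_l\alpha)^t l_{j,0}$ and $h_{j,t}=\theta_h\theta_l^{t-1}\alpha^t h_{j,0}$. The multi-valued linear threshold (MLT) model with parameters $l'_j<h'_j$, $m_j$ is the dynamics $x'_j(t)=g_j(\sum_i W_{ij}x'_i(t-1))$ for $t>0$, where $g_j(y)=0$ if $y<l'_j$, $g_j(y)=\frac{m_j-1}{h'_j-l'_j}(y-l'_j)+1$ if $l'_j\le y<h'_j$, and $g_j(y)=m_j$ if $y\ge h'_j$, with initial values $x'_j(0)\in\{0\}\cup[1,h'_{j,0}]$.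 *)

From HB Require Import structures.
From mathcomp Require Import all_boot all_order all_algebra.
From mathcomp Require Import all_classical all_reals all_analysis.
Set Implicit Arguments. Unset Strict Implicit. Unset Printing Implicit Defensive.
Import Order.TTheory GRing.Theory Num.Theory.
Local Open Scope ring_scope.

Section Defs.
Variable R : realType.
Variable n : nat.

Definition edge_set (W : 'M[R]_n) : {set 'I_n * 'I_n} :=
  [set p | 0 < W p.1 p.2].

Definition mean_weight (W : 'M[R]_n) : R :=
  (\sum_(p in edge_set W) W p.1 p.2) / (#|edge_set W|)%:R.

Definition in_sum (W : 'M[R]_n) (x : 'I_n -> R) (j : 'I_n) : R :=
  \sum_(i < n) W i j * x i.

Definition gip_f (l h x : R) : R :=
  if x < l then 0 else if x < h then x else h.

Fixpoint gip_state (W : 'M[R]_n) (l h : nat -> 'I_n -> R) (x0 : 'I_n -> R)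
  (t : nat) : 'I_n -> R :=
  match t with
  | 0 => x0
  | t'.+1 => fun j => gip_f (l t j) (h t j) (in_sum W (gip_state W l h x0 t') j)
  end.

Definition gip_admissible (l h : nat -> 'I_n -> R) (x0 : 'I_n -> R) : Prop :=
  forall j, x0 j = 0 \/ (l 0%N j <= x0 j /\ x0 j <= h 0%N j).

Definition thr_low (W : 'M[R]_n) (thl : R) (l0 : 'I_n -> R) (t : nat) (j : 'I_n) : R :=
  (thl * mean_weight W) ^+ t * l0 j.

Definition thr_high (W : 'M[R]_n) (thl thh : R) (h0 : 'I_n -> R) (t : nat) (j : 'I_n) : R :=
  match t with
  | 0 => h0 j
  | t'.+1 => thh * thl ^+ t' * (mean_weight W) ^+ t * h0 j
  end.

Definition mlt_g (l' h' m y : R) : R :=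
  if y < l' then 0
  else if y < h' then (m - 1) / (h' - l') * (y - l') + 1
  else m.

Fixpoint mlt_state (W : 'M[R]_n) (l' h' m : 'I_n -> R) (x0 : 'I_n -> R)
  (t : nat) : 'I_n -> R :=
  match t with
  | 0 => x0
  | t'.+1 => fun j => mlt_g (l' j) (h' j) (m j) (in_sum W (mlt_state W l' h' m x0 t') j)
  end.

End Defs.

From HB Require Import structures.
From mathcomp Require Import all_boot all_order all_algebra.
From mathcomp Require Import all_classical all_reals all_analysis.
From mathcomp Require Import ring.
Set Implicit Arguments. Unset Strict Implicit. Unset Printing Implicit Defensive.
Import Order.TTheory GRing.Theory Num.Theory.
Local Open Scope ring_scope.

(* With [c := thl * alpha], the threshold-type GIP bounds at time [t+1] are
   [c^t] times the constant bounds [c] and [thh * alpha * h0 j]; the GIP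
   truncation commutes with positive scaling, and an MLT activation whose top
   level is [m = h'/l'] is exactly the truncation divided by [l'].  Hence
   [x t = c^t x' t] by induction on [t]; the discounted statements follow
   since [(1 - gamma) c = 1 - gamma']. *)

Lemma mean_weight_gt0 (R : realType) (n : nat) (W : 'M[R]_n) :
  (exists i j, 0 < W i j) -> 0 < mean_weight W.
Proof.
move=> [i [j Wij_gt0]].
have ij_edge : (i, j) \in edge_set W by rewrite inE.
rewrite /mean_weight divr_gt0 //; last first.
  by rewrite ltr0n; apply/card_gt0P; exists (i, j).
rewrite (bigD1 (i, j)) //= ltr_pwDl //.
by apply: sumr_ge0 => p /andP[]; rewrite inE => /ltW.
Qed.

Lemma in_sumZ (R : realType) (n : nat) (W : 'M[R]_n) (k : R) (x : 'I_n -> R) j :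
  in_sum W (fun i => k * x i) j = k * in_sum W x j.
Proof. by rewrite /in_sum mulr_sumr; apply: eq_bigr => i _; rewrite mulrCA. Qed.

Lemma gip_state_succ (R : realType) (n : nat) (W : 'M[R]_n) l h x0 t j :
  gip_state W l h x0 t.+1 j =
  gip_f (l t.+1 j) (h t.+1 j) (in_sum W (gip_state W l h x0 t) j).
Proof. by []. Qed.

Lemma mlt_state_succ (R : realType) (n : nat) (W : 'M[R]_n) l' h' m x0 t j :
  mlt_state W l' h' m x0 t.+1 j =
  mlt_g (l' j) (h' j) (m j) (in_sum W (mlt_state W l' h' m x0 t) j).
Proof. by []. Qed.

Lemma gip_fZ (R : realType) (c l h y : R) :
  0 < c -> gip_f (c * l) (c * h) (c * y) = c * gip_f l h y.
Proof. by move=> c_gt0; rewrite /gip_f !ltr_pM2l //; do 2?case: ifP; rewrite ?mulr0. Qed.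

Lemma mlt_g_gip_f (R : realType) (l h y : R) :
  0 < l -> l < h -> mlt_g l h (h / l) y = gip_f l h y / l.
Proof.
move=> l_gt0 lh; rewrite /mlt_g /gip_f.
case: ifP => _; first by rewrite mul0r.
case: ifP => _ //.
by field; rewrite (gt_eqF l_gt0) subr_eq0 (gt_eqF lh).
Qed.

Section ThresholdGIP.
Variables (R : realType) (n : nat) (W : 'M[R]_n) (thl thh : R).
Variables (h0 x0 : 'I_n -> R).
Hypothesis thl_gt0 : 0 < thl.
Hypothesis alpha_gt0 : 0 < mean_weight W.
Hypothesis thl_lt_thh_h0 : forall j, thl < thh * h0 j.

Let alpha := mean_weight W.
Let c := thl * alpha.

Lemma thr_low_succ t j : thr_low W thl (fun _ => 1) t.+1 j = c ^+ t * c.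
Proof. by rewrite /thr_low mulr1 exprSr. Qed.

Lemma thr_high_succ t j :
  thr_high W thl thh h0 t.+1 j = c ^+ t * (thh * alpha * h0 j).
Proof.
rewrite /= /c /alpha; move: (mean_weight W) => a.
by rewrite exprMn exprS; ring.
Qed.

Lemma gip_state_thr_scaled t j :
  gip_state W (thr_low W thl (fun _ => 1)) (thr_high W thl thh h0) x0 t j =
  c ^+ t * mlt_state W (fun _ => c) (fun j => thh * alpha * h0 j)
                       (fun j => thh * h0 j / thl) x0 t j.
Proof.
have c_gt0 : 0 < c by rewrite mulr_gt0.
elim: t j => [|t IH] j; first by rewrite mul1r.
rewrite gip_state_succ mlt_state_succ.
set xg := gip_state _ _ _ _ t; set xm := mlt_state _ _ _ _ _ t.
have -> : xg = (fun i => c ^+ t * xm i) by exact: funext.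
rewrite in_sumZ thr_low_succ thr_high_succ gip_fZ ?exprn_gt0 //.
have lh : c < thh * alpha * h0 j by rewrite -mulrAC ltr_pM2r.
have -> : thh * h0 j / thl = thh * alpha * h0 j / c.
  by rewrite /c; field; rewrite !gt_eqF.
by rewrite mlt_g_gip_f // exprSr -[RHS]mulrA [c * _]mulrC divfK ?gt_eqF.
Qed.

End ThresholdGIP.

Theorem theorem2 (R : realType) (n : nat) (W : 'M[R]_n) (thl thh : R)
    (h0 : 'I_n -> R) (x0 : 'I_n -> R) :
  (forall i j, 0 <= W i j) ->
  (exists i j, 0 < W i j) ->
  0 < thl ->
  (forall j, 1 <= h0 j) ->
  (forall j, thl < thh * h0 j) ->
  let alpha := mean_weight W in
  let l := thr_low W thl (fun _ => 1) in
  let h := thr_high W thl thh h0 in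
  gip_admissible l h x0 ->
  let x := gip_state W l h x0 in
  let x' := mlt_state W (fun _ => thl * alpha) (fun j => thh * alpha * h0 j)
              (fun j => thh * h0 j / thl) x0 in
  (forall (t : nat) (j : 'I_n), x t j = (thl * alpha) ^+ t * x' t j) /\
  (forall gamma : R, 0 <= gamma -> gamma < 1 ->
     let gamma' := 1 - (1 - gamma) * thl * alpha in
     forall j : 'I_n,
       (forall t : nat, (1 - gamma) ^+ t * x t j = (1 - gamma') ^+ t * x' t j) /\
       (cvgn (fun N => \sum_(1 <= t < N) (1 - gamma) ^+ t * x t j) \/
        cvgn (fun N => \sum_(1 <= t < N) (1 - gamma') ^+ t * x' t j) ->
          cvgn (fun N => \sum_(1 <= t < N) (1 - gamma) ^+ t * x t j) /\
          cvgn (fun N => \sum_(1 <= t < N) (1 - gamma') ^+ t * x' t j) /\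
          limn (fun N => \sum_(1 <= t < N) (1 - gamma) ^+ t * x t j) =
          limn (fun N => \sum_(1 <= t < N) (1 - gamma') ^+ t * x' t j))).
Proof.
move=> _ has_edge thl_gt0 _ thl_lt_thh_h0 alpha l h _ x x'.
have scaled : forall t j, x t j = (thl * alpha) ^+ t * x' t j.
  exact: gip_state_thr_scaled thl_gt0 (mean_weight_gt0 has_edge) thl_lt_thh_h0.
split=> // gamma _ _ gamma' j.
have discounted t : (1 - gamma) ^+ t * x t j = (1 - gamma') ^+ t * x' t j.
  by rewrite scaled mulrA -exprMn /gamma'; congr (_ ^+ _ * _); ring.
have -> : (fun N => \sum_(1 <= t < N) (1 - gamma) ^+ t * x t j) =
          (fun N => \sum_(1 <= t < N) (1 - gamma') ^+ t * x' t j).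
  by apply: funext => N; apply: eq_bigr => t _; exact: discounted.
by split=> //; case.
Qed.
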